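(* Let $1\le p,q<\infty$, $\theta>0$ and $\varepsilon_0\in(0,\infty)$. For $g\in l^{q),\theta}(L^p)$ define $$\|g\|_{p,q),\theta,\varepsilon_0}:=\sup_{0<\varepsilon\le\varepsilon_0}\varepsilon^{\frac{\theta}{q(1+\varepsilon)}}\|g\|_{l^{q(1+\varepsilon)}(L^p)}.$$ Then $\|\cdot\|_{p,q),\theta}$ and $\|\cdot\|_{p,q),\theta,\varepsilon_0}$ are equivalent norms; more precisely, for every such $g$, $$\|g\|_{p,q),\theta,\varepsilon_0}\le\|g\|_{p,q),\theta}\le (c(\varepsilon_0))^{\frac{\theta}{q}}\|g\|_{p,q),\theta,\varepsilon_0},\qquad c(\varepsilon_0)=\frac{1}{\mathrm e\,W(1/\mathrm e)}\,\varepsilon_0^{-\frac{1}{1+\varepsilon_0}},$$ where $W$ is the Lambert function.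
   Context: Let $X$ be one of $\mathbb N,\mathbb N_0,\mathbb Z$ and $I_k=[k,k+1)$ for $k\in X$. For $1\le r<\infty$ and $1\le p<\infty$, $\|g\|_{l^{r}(L^p)}:=\Big(\sum_{k\in X}\Big(\int_{I_k}|g|^p\,dx\Big)^{r/p}\Big)^{1/r}$. The space $l^{q),\theta}(L^p)$ consists of complex-valued measurable $g$ on $\bigcup_{k\in X}I_k$ with $g\chi_{I_k}\in L^p$ for all $k$ and $\|g\|_{p,q),\theta}:=\sup_{\varepsilon>0}\varepsilon^{\frac{\theta}{q(1+\varepsilon)}}\|g\|_{l^{q(1+\varepsilon)}(L^p)}<\infty$. The Lambert function $W$ is the inverse of $y\mapsto y\mathrm e^y$ on $(0,\infty)$. *)

From HB Require Import structures.
From mathcomp Require Import all_boot all_order all_algebra.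
From mathcomp Require Import all_classical all_reals all_analysis.
From mathcomp Require complex.
Set Implicit Arguments. Unset Strict Implicit. Unset Printing Implicit Defensive.
Import Order.TTheory GRing.Theory Num.Theory.
Local Open Scope classical_set_scope.
Local Open Scope ring_scope.

Inductive Xkind := XN | XN0 | XZ.

Definition Xset (X : Xkind) : set int :=
  match X with
  | XN => [set k : int | (1 <= k)%R]
  | XN0 => [set k : int | (0 <= k)%R]
  | XZ => [set: int]
  end.

Definition Ik {R : realType} (k : int) : set R := `[k%:~R, k%:~R + 1[%classic.

Definition domX {R : realType} (X : Xkind) : set R :=
  \bigcup_(k in Xset X) Ik k.

Definition cabs {R : realType} (z : complex.complex R) : R :=
  Num.sqrt (complex.Re z ^+ 2 + complex.Im z ^+ 2).

Definition locLp {R : realType} (p : R) (g : R -> complex.complex R) (k : int)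
  : \bar R :=
  (\int[@lebesgue_measure R]_(x in Ik k) ((cabs (g x)) `^ p)%:E)%E.

Definition lrLp {R : realType} (X : Xkind) (r p : R) (g : R -> complex.complex R)
  : \bar R :=
  ((\esum_(k in Xset X) (locLp p g k `^ (r / p))) `^ (1 / r))%E.

Definition grandNorm {R : realType} (X : Xkind) (p q theta : R)
  (g : R -> complex.complex R) : \bar R :=
  ereal_sup [set ((eps `^ (theta / (q * (1 + eps))))%:E
                  * lrLp X (q * (1 + eps)) p g)%E | eps in `]0, +oo[%classic].

Definition grandNormLoc {R : realType} (X : Xkind) (p q theta eps0 : R)
  (g : R -> complex.complex R) : \bar R :=
  ereal_sup [set ((eps `^ (theta / (q * (1 + eps))))%:E
                  * lrLp X (q * (1 + eps)) p g)%E | eps in `]0, eps0]%classic].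

Definition in_grand {R : realType} (X : Xkind) (p q theta : R)
  (g : R -> complex.complex R) : Prop :=
  [/\ measurable_fun (domX X) (fun x => complex.Re (g x)),
      measurable_fun (domX X) (fun x => complex.Im (g x)),
      (forall k, Xset X k -> (locLp p g k < +oo)%E) &
      (grandNorm X p q theta g < +oo)%E].

(* Lambert function: W y is the unique w > 0 with w e^w = y (for y > 0). *)
Definition LambertW {R : realType} (y : R) : R :=
  xget 0 [set w : R | 0 < w /\ w * expR w = y].

Definition c_eps0 {R : realType} (eps0 : R) : R :=
  (expR 1 * LambertW (expR 1)^-1)^-1 * eps0 `^ (- (1 / (1 + eps0))).

From HB Require Import structures.
From mathcomp Require Import all_boot all_order all_algebra.
From mathcomp Require Import all_classical all_reals all_analysis.
From mathcomp Require complex.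
From mathcomp Require Import lra.
Import Order.TTheory GRing.Theory Num.Theory.
Import numFieldNormedType.Exports.
Local Open Scope ring_scope.

(* Put w = W(1/e), so that ln w = -1 - w and 1/(e w) = exp w. The tangent bound
   ln x <= x - 1 at x = w eps gives ln eps <= w (1 + eps), i.e. the weight
   eps^(1/(1+eps)) never exceeds exp w, and c(eps0) eps0^(1/(1+eps0)) is exactly
   exp w. Hence for eps > eps0 the weight at eps is at most c(eps0)^(theta/q)
   times the weight at eps0, while the l^r(L^p) norm only decreases as
   r = q(1+eps) grows; for eps <= eps0 the term already occurs in the local
   supremum, and c(eps0) >= 1. *)

Section lambertW_inv_e.
Variable R : realType.
Local Notation w := (@LambertW R (expR 1)^-1).

Lemma lambertW_inv_e_spec : 0 < w /\ w * expR w = (expR 1)^-1.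
Proof.
suff ex : exists x : R, 0 < x /\ x * expR x = (expR 1)^-1.
  by have := xgetPex 0 ex.
have e1 : (1 : R) <= expR 1 by have := expR_ge1Dx (1 : R); lra.
have [c c01 fc] : exists2 c : R, c \in `[0, 1] & c * expR c = (expR 1)^-1.
  apply: (IVT (f := fun x => x * expR x)) => //.
    apply: continuous_subspaceT => x.
    by apply: cvgM; [exact: cvg_id | exact: continuous_expR].
  have e0 : (0 : R) <= expR 1 by exact: expR_ge0.
  rewrite /= mul0r mul1r (min_l e0) (max_r e0) invr_ge0 e0 /=.
  by rewrite (le_trans _ e1)// invf_le1 ?(lt_le_trans _ e1).
exists c; split => //.
move: c01; rewrite in_itv /= => /andP[]; rewrite le_eqVlt => /predU1P[c0|//] _.
by move: fc; rewrite -c0 mul0r => /esym/eqP; rewrite invr_eq0 gt_eqF ?expR_gt0.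
Qed.

Lemma lambertW_inv_eE : (expR 1 * w)^-1 = expR w.
Proof.
have := lambertW_inv_e_spec; move: (LambertW _) => v [v0 hv].
by rewrite invfM -hv mulrAC mulfV ?gt_eqF// mul1r.
Qed.

Lemma ln_lambertW_inv_e : ln w = -1 - w.
Proof.
have := lambertW_inv_e_spec; move: (LambertW _) => v [v0 hv].
have ev : v = expR (-1 - v) by rewrite expRD !expRN -hv mulfK ?gt_eqF ?expR_gt0.
by rewrite {1}ev expRK.
Qed.

Lemma ln_le_lambertW_inv_e (eps : R) : 0 < eps -> ln eps <= w * (1 + eps).
Proof.
move=> eps0; have [w0 _] := lambertW_inv_e_spec.
have := @le_ln1Dx R (w * eps - 1).
rewrite [1 + _]addrC subrK lnM ?posrE ?mulr_gt0// ln_lambertW_inv_e.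
have -> : -1 < w * eps - 1 by rewrite ltrBrDr addrC subrr mulr_gt0.
by move=> /(_ isT); lra.
Qed.

Lemma powR_inv1D_le (eps : R) : 0 < eps ->
  eps `^ (1 + eps)^-1 <= (expR 1 * w)^-1.
Proof.
move=> eps0; rewrite lambertW_inv_eE -[X in X `^ _ <= _](lnK eps0) -expRM.
by rewrite ler_expR ler_pdivrMr ?ln_le_lambertW_inv_e//; lra.
Qed.

Lemma c_eps0_mul_powR (eps0 : R) : 0 < eps0 ->
  c_eps0 eps0 * eps0 `^ (1 + eps0)^-1 = (expR 1 * w)^-1.
Proof.
move=> eps00; rewrite /c_eps0 -mulrA -powRD; last by rewrite (gt_eqF eps00) implybT.
by rewrite div1r addNr powRr0 mulr1.
Qed.

Lemma c_eps0_ge0 (eps0 : R) : 0 <= c_eps0 eps0.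
Proof.
have [w0 _] := lambertW_inv_e_spec.
by rewrite /c_eps0 mulr_ge0 ?powR_ge0// invr_ge0 mulr_ge0 ?expR_ge0 ?ltW.
Qed.

Lemma weight_le_c_eps0 {a eps eps0 : R} : 0 <= a -> 0 < eps -> 0 < eps0 ->
  eps `^ (a / (1 + eps)) <= c_eps0 eps0 `^ a * eps0 `^ (a / (1 + eps0)).
Proof.
move=> a0 eps_gt0 eps00.
rewrite [a / (1 + eps)]mulrC [a / (1 + eps0)]mulrC !powRrM.
rewrite -powRM ?c_eps0_ge0 ?powR_ge0// c_eps0_mul_powR//.
apply: ge0_ler_powR; rewrite ?nnegrE ?powR_ge0 ?powR_inv1D_le//.
by rewrite lambertW_inv_eE expR_ge0.
Qed.

Lemma c_eps0_powR_ge1 (a eps0 : R) : 0 <= a -> 0 < eps0 -> 1 <= c_eps0 eps0 `^ a.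
Proof.
move=> a0 eps00; have := weight_le_c_eps0 a0 eps00 eps00.
by rewrite -[X in X <= _ -> _]mul1r ler_pM2r ?powR_gt0.
Qed.

End lambertW_inv_e.

Lemma powR_le_mul_powR (R : realType) (x y r s : R) : 0 < r -> r <= s ->
  y `^ r <= x -> y `^ s <= y `^ r * x `^ (s / r - 1).
Proof.
move=> r0 rs yx.
have -> : y `^ s = (y `^ r) `^ (s / r) by rewrite -powRrM mulrC divfK ?gt_eqF.
rewrite -mulr_powRB1 ?powR_ge0 ?divr_gt0 ?(lt_le_trans r0)//.
apply: ler_wpM2l; first exact: powR_ge0.
apply: ge0_ler_powR; rewrite ?nnegrE ?powR_ge0 ?(le_trans (powR_ge0 _ _) yx)//.
by rewrite subr_ge0 ler_pdivlMr// mul1r.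
Qed.

Section esum_norm.
Context {R : realType} {T : choiceType}.
Local Open Scope ereal_scope.

Lemma ge0_esum_mulr_le (A : set T) (a : T -> \bar R) (c : R) :
  (0 <= c)%R -> (forall k, 0 <= a k) ->
  \esum_(k in A) (a k * c%:E) <= (\esum_(k in A) a k) * c%:E.
Proof.
move=> c0 a0; apply: ge_ereal_sup => _ [F [finF FA] <-].
rewrite -ge0_mule_fsuml//; apply: lee_wpmul2r; first by rewrite lee_fin.
by apply: ereal_sup_ubound; exists F.
Qed.

Definition esum_norm (A : set T) (r : R) (b : T -> \bar R) : \bar R :=
  (\esum_(k in A) b k `^ r) `^ r^-1.

(* With S = sum b_k^r, every b_k^r <= S, so b_k^s <= b_k^r S^(s/r - 1)
   and sum b_k^s <= S^(s/r). *)
Lemma esum_norm_antimono (A : set T) (b : T -> \bar R) (r s : R) :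
  (0 < r)%R -> (r <= s)%R -> (forall k, A k -> 0 <= b k < +oo) ->
  esum_norm A s b <= esum_norm A r b.
Proof.
move=> r0 rs hb; have s0 : (0 < s)%R := lt_le_trans r0 rs.
rewrite /esum_norm; set S := \esum_(k in A) b k `^ r.
have [->|Sy] := eqVneq S +oo; first by rewrite poweRyr ?leey// invr_eq0 gt_eqF.
have : S \is a fin_num.
  by rewrite ge0_fin_numE ?ltey// esum_ge0// => k _; exact: poweR_ge0.
move=> /fineK Sx; rewrite -Sx; set x := fine S.
have x0 : (0 <= x)%R by rewrite -lee_fin Sx esum_ge0// => k _; exact: poweR_ge0.
have term_le k : A k -> b k `^ r <= x%:E.
  move=> Ak; rewrite Sx; apply: esum_ge.
  exists [set k]%classic; first by split; [exact: finite_set1 | move=> ? ->].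
  by rewrite fsbig_set1.
have sum_le : \esum_(k in A) b k `^ s <= (x `^ (s / r))%:E.
  apply: le_trans (le_esum (b := fun k => b k `^ r * (x `^ (s / r - 1))%:E) _) _.
    move=> k Ak; have /andP[b0 bk] := hb k Ak.
    move: (term_le k Ak); have /fineK <- : b k \is a fin_num by rewrite ge0_fin_numE.
    rewrite !poweR_EFin -EFinM !lee_fin; exact: powR_le_mul_powR.
  apply: le_trans (ge0_esum_mulr_le _ _ _ (powR_ge0 _ _) _) _ => [k|].
    exact: poweR_ge0.
  by rewrite -/S -Sx -EFinM mulr_powRB1 ?divr_gt0.
apply: le_trans (gt0_ler_poweR _ _ _ sum_le) _.
- by rewrite invr_ge0 ltW.
- by rewrite in_itv /= leey andbT esum_ge0// => k _; exact: poweR_ge0.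
- by rewrite in_itv /= leey andbT lee_fin powR_ge0.
- by rewrite poweR_EFin -powRrM mulrAC divff ?gt_eqF// mul1r.
Qed.

End esum_norm.

Section grand_lebesgue.
Context {R : realType}.
Local Open Scope ereal_scope.

Lemma lrLpE (X : Xkind) (r p : R) (g : R -> complex.complex R) :
  lrLp X r p g = esum_norm (Xset X) r (fun k => locLp p g k `^ p^-1).
Proof.
rewrite /lrLp /esum_norm div1r; congr (_ `^ _).
by apply: eq_esum => k _; rewrite -poweRrM mulrC.
Qed.

Lemma lrLp_antimono (X : Xkind) (p r s : R) (g : R -> complex.complex R) :
  (0 < r)%R -> (r <= s)%R -> (forall k, Xset X k -> locLp p g k < +oo) ->
  lrLp X s p g <= lrLp X r p g.
Proof.
move=> r0 rs loc_fin; rewrite !lrLpE; apply: esum_norm_antimono => // k Xk.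
by rewrite poweR_ge0 poweR_lty ?loc_fin.
Qed.

Lemma grandNormLoc_le (X : Xkind) (p q theta eps0 : R)
    (g : R -> complex.complex R) :
  grandNormLoc X p q theta eps0 g <= grandNorm X p q theta g.
Proof.
apply: ge_ereal_sup => _ [e + <-]; rewrite /= in_itv /= => /andP[e0 _].
by apply: ereal_sup_ubound; exists e; rewrite //= in_itv /= e0.
Qed.

Lemma grandNorm_le_c_eps0 (X : Xkind) (p q theta eps0 : R)
    (g : R -> complex.complex R) :
  (0 < q)%R -> (0 <= theta)%R -> (0 < eps0)%R ->
  (forall k, Xset X k -> locLp p g k < +oo) ->
  grandNorm X p q theta g
    <= (c_eps0 eps0 `^ (theta / q))%:E * grandNormLoc X p q theta eps0 g.
Proof.
move=> q0 theta0 eps00 loc_fin.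
have weightE e : (theta / (q * (1 + e)) = theta / q / (1 + e))%R.
  by rewrite invfM mulrA.
set L := grandNormLoc X p q theta eps0 g.
have term_le_L e : (0 < e <= eps0)%R ->
    (e `^ (theta / (q * (1 + e))))%:E * lrLp X (q * (1 + e)) p g <= L.
  by move=> e_itv; apply: ereal_sup_ubound; exists e; rewrite //= in_itv.
have L0 : 0 <= L.
  apply: le_trans (term_le_L eps0 _); last by rewrite eps00 lexx.
  by rewrite mule_ge0 ?lee_fin ?powR_ge0 ?poweR_ge0.
apply: ge_ereal_sup => _ [e + <-]; rewrite /= in_itv /= andbT => e0.
have [e_le|e_gt] := leP e eps0.
  apply: le_trans (term_le_L e _) _; first by rewrite e0.
  by rewrite lee_pemull// lee_fin c_eps0_powR_ge1 ?divr_ge0 ?(ltW q0).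
have N_le : lrLp X (q * (1 + e)) p g <= lrLp X (q * (1 + eps0)) p g.
  by apply: lrLp_antimono => //; [rewrite mulr_gt0 | rewrite ler_pM2l]; lra.
apply: le_trans (lee_wpmul2l _ N_le) _; first by rewrite lee_fin powR_ge0.
have w_le : (e `^ (theta / (q * (1 + e))))%:E
    <= (c_eps0 eps0 `^ (theta / q) * eps0 `^ (theta / (q * (1 + eps0))))%:E.
  by rewrite lee_fin !weightE weight_le_c_eps0 ?divr_ge0 ?(ltW q0).
apply: le_trans (lee_wpmul2r (poweR_ge0 _ _) w_le) _.
by rewrite EFinM -muleA lee_wpmul2l ?lee_fin ?powR_ge0// term_le_L ?eps00 ?lexx.
Qed.

End grand_lebesgue.

Theorem lemma2p7 (R : realType) (X : Xkind) (p q theta eps0 : R)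
  (g : R -> complex.complex R) :
  1 <= p -> 1 <= q -> 0 < theta -> 0 < eps0 ->
  in_grand X p q theta g ->
  (grandNormLoc X p q theta eps0 g <= grandNorm X p q theta g)%E /\
  (grandNorm X p q theta g
     <= (c_eps0 eps0 `^ (theta / q))%:E * grandNormLoc X p q theta eps0 g)%E.
Proof.
move=> _ q1 theta0 eps00 [_ _ loc_fin _]; split; first exact: grandNormLoc_le.
by apply: grandNorm_le_c_eps0 => //; [exact: lt_le_trans q1 | exact: ltW].
Qed.
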